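(* Let $U\subset\mathbb P^{r,s,t}$ be a connected open set containing a null point and let $F:U\to\mathbb P^{r',s',t'}$ be a local orthogonal map. Then for every null space $N\subset\mathbb P^{r,s,t}$, the image $F(N\cap U)$ is contained in a null space of $\mathbb P^{r',s',t'}$ (equivalently, the projective linear span of $F(N\cap U)$ is a null space). In particular, $F$ maps null points to null points.
   Context: Let $r,s,t\ge 0$ be integers with $n=r+s+t>0$. $\mathbb C^{r,s,t}$ denotes $\mathbb C^n$ equipped with the (possibly degenerate, indefinite) Hermitian form $\langle z,w\rangle_{r,s,t}=\sum_{j=1}^{r}z_j\bar w_j-\sum_{j=r+1}^{r+s}z_j\bar w_j$, and $\mathbb P^{r,s,t}$ is its projectivization; $\mathbb C^{r,s}=\mathbb C^{r,s,0}$, $\mathbb P^{r,s}=\mathbb P^{r,s,0}$. A point $[z]\in\mathbb P^{r,s,t}$ is positive, negative or null according as $\langle z,z\rangle_{r,s,t}>0$, $<0$ or $=0$. Two points $[z],[w]$ are orthogonal, $[z]\perp[w]$, if $\langle z,w\rangle_{r,s,t}=0$; the orthogonal complement $[z]^\perp$ is the set of points orthogonal to $[z]$. For a complex linear subspace $H\subset\mathbb C^{r,s,t}$ on which the restricted form has $a$ positive, $b$ negative and $c$ zero eigenvalues, $\mathbb PH$ is called an $(a,b,c)$-subspace; it is a null space if $a=b=0$ (i.e. the form vanishes identically on $H$). A $k$-plane is a $k$-dimensional projective linear subspace. Let $U\subset\mathbb P^{r,s,t}$ be a connected open set containing a null point. A holomorphic map $F:U\to\mathbb P^{r',s',t'}$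 is called a local orthogonal map if $F(p)\perp F(q)$ for all $p,q\in U$ with $p\perp q$. *)

From HB Require Import structures.
From mathcomp Require Import all_boot all_order all_algebra.
From mathcomp Require Import complex.
From mathcomp Require Import all_classical all_reals all_analysis.
Set Implicit Arguments. Unset Strict Implicit. Unset Printing Implicit Defensive.
Import Order.TTheory GRing.Theory Num.Theory ComplexField.
Import numFieldNormedType.Exports.
Local Open Scope ring_scope.
Local Open Scope classical_set_scope.

Section Defs.
Variable R : realType.
Notation C := (R[i]^o).

Definition hsign (r s : nat) (j : nat) : C :=
  if (j < r)%N then 1 else if (j < r + s)%N then -1 else 0.

Definition herm (r s t : nat) (z w : 'rV[C]_(r + s + t)) : C :=
  \sum_(j < r + s + t) hsign r s j * z ord0 j * conjc (w ord0 j : R[i]).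

(* u and v span the same complex line (represent the same projective point) *)
Definition proportional m (u v : 'rV[C]_m) : Prop :=
  exists2 c : C, c != 0 & u = c *: v.

Definition null_subspace (r s t : nat) (H : {vspace 'rV[C]_(r + s + t)}) : Prop :=
  forall x y, x \in H -> y \in H -> herm x y = 0.

(* An open subset of P^{r,s,t} is represented by its (punctured) cone in C^n. *)
Definition proj_open_cone m (U : set 'rV[C]_m) : Prop :=
  open U /\ ~ U 0 /\ (forall z c, U z -> c != 0 -> U (c *: z)).

(* f : vectors -> vectors represents a holomorphic map U -> P^{n'} via
   [z] |-> [f z]: f is well defined projectively, nonvanishing, and locally
   admits holomorphic (complex-differentiable) lifts. *)
Definition proj_holomorphic m m' (U : set 'rV[C]_m) (f : 'rV[C]_m -> 'rV[C]_m') : Prop :=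
  (forall z, U z -> f z != 0) /\
  (forall z c, U z -> c != 0 -> proportional (f (c *: z)) (f z)) /\
  (forall z0, U z0 -> exists V : set 'rV[C]_m, exists g : 'rV[C]_m -> 'rV[C]_m',
     [/\ open V, V z0, V `<=` U &
       forall z, V z -> [/\ differentiable g z, g z != 0 & proportional (g z) (f z)]]).

Definition local_orthogonal (r s t r' s' t' : nat) (U : set 'rV[C]_(r + s + t))
  (f : 'rV[C]_(r + s + t) -> 'rV[C]_(r' + s' + t')) : Prop :=
  forall z w, U z -> U w -> herm z w = 0 -> herm (f z) (f w) = 0.

End Defs.

From HB Require Import structures.
From mathcomp Require Import all_boot all_order all_algebra.
From mathcomp Require Import complex.
From mathcomp Require Import all_classical all_reals all_analysis.
From mathcomp Require Import ring zify.
Import Order.TTheory GRing.Theory Num.Theory ComplexField.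
Import numFieldNormedType.Exports.
Local Open Scope ring_scope.
Local Open Scope classical_set_scope.

(* Points of a null space are pairwise orthogonal, so their images are
   pairwise orthogonal by local orthogonality, and a family of pairwise
   orthogonal vectors spans a null space.  The second claim is the special
   case of a null point orthogonal to itself. *)

Section SpanningSeq.
Variables (K : fieldType) (vT : vectType K).

Lemma ltn_dim_span_cons (v : vT) (X : seq vT) :
  v \notin <<X>>%VS -> (\dim <<X>> < \dim <<v :: X>>)%N.
Proof.
move=> vNX; have sXvX : (<<X>> <= <<v :: X>>)%VS.
  by apply: sub_span => u uX; rewrite inE uX orbT.
rewrite (ltn_leqif (dimv_leqif_sup sXvX)).
by apply: contra vNX => /subvP; apply; rewrite memv_span // mem_head.
Qed.

Lemma exists_spanning_seq (S : set vT) :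
  exists2 X : seq vT, (forall v, v \in X -> S v) & (forall v, S v -> v \in <<X>>%VS).
Proof.
suff grow n (X : seq vT) : (forall v, v \in X -> S v) ->
    (\dim {: vT} - \dim <<X>> <= n)%N ->
    exists2 Y : seq vT, (forall v, v \in Y -> S v) & (forall v, S v -> v \in <<Y>>%VS).
  by apply: (grow _ [::]) => //.
elim: n X => [|n IHn] X XS dimX.
all: have [spanS|/existsNP[v /not_implyP[Sv /negP vNX]]] :=
  pselect (forall v, S v -> v \in <<X>>%VS); first by exists X.
all: have := ltn_dim_span_cons _ _ vNX; have := dimvS (subvf <<v :: X>>).
- by lia.
- move=> ? ?; apply: (IHn (v :: X)); last by lia.
  by move=> u; rewrite inE => /orP[/eqP-> // | /XS].
Qed.

End SpanningSeq.

Section Sesquilinear.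
Variables (R : realType) (r s t : nat).
Local Notation V := 'rV[R[i]^o]_(r + s + t).

Lemma hermDl (x y w : V) : herm (x + y) w = herm x w + herm y w.
Proof.
by rewrite /herm -big_split; apply: eq_bigr => j _; rewrite mxE mulrDr mulrDl.
Qed.

Lemma herm0l (w : V) : herm 0 w = 0.
Proof. by rewrite /herm big1 // => j _; rewrite mxE mulr0 mul0r. Qed.

Lemma hermZl a (x w : V) : herm (a *: x) w = a * herm x w.
Proof. by rewrite /herm mulr_sumr; apply: eq_bigr => j _; rewrite mxE; ring. Qed.

Lemma hermDr (x y w : V) : herm w (x + y) = herm w x + herm w y.
Proof.
rewrite /herm -big_split; apply: eq_bigr => j _.
by rewrite mxE (rmorphD (@conjc R)) mulrDr.
Qed.

Lemma herm0r (w : V) : herm w 0 = 0.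
Proof. by rewrite /herm big1 // => j _; rewrite mxE (rmorph0 (@conjc R)) mulr0. Qed.

Lemma hermZr a (x w : V) : herm w (a *: x) = conjc (a : R[i]) * herm w x.
Proof.
rewrite /herm mulr_sumr; apply: eq_bigr => j _.
by rewrite mxE (rmorphM (@conjc R)) mulrCA.
Qed.

Lemma null_subspace_span (X : seq V) :
  {in X &, forall u v, herm u v = 0} -> null_subspace <<X>>%VS.
Proof.
move=> orthX x y /(coord_span (X := in_tuple X)) -> yX.
rewrite (big_morph (fun u : V => herm u y) (fun a b => hermDl a b y) (herm0l y)).
rewrite big1 // => i _; rewrite hermZl (coord_span (X := in_tuple X) yX).
rewrite (big_morph (herm X`_i) (fun a b => hermDr a b X`_i) (herm0r X`_i)).
rewrite big1 ?mulr0 // => j _.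
by rewrite hermZr orthX ?mulr0 // mem_nth.
Qed.

End Sesquilinear.

Theorem mainTheorem1 (R : realType) (r s t r' s' t' : nat)
  (U : set 'rV[R[i]^o]_(r + s + t))
  (f : 'rV[R[i]^o]_(r + s + t) -> 'rV[R[i]^o]_(r' + s' + t')) :
  (0 < r + s + t)%N -> (0 < r' + s' + t')%N ->
  proj_open_cone U -> connected U ->
  (exists z, U z /\ herm z z = 0) ->
  proj_holomorphic U f ->
  local_orthogonal U f ->
  (forall N : {vspace 'rV[R[i]^o]_(r + s + t)}, null_subspace N ->
     exists N' : {vspace 'rV[R[i]^o]_(r' + s' + t')},
       null_subspace N' /\ (forall z, U z -> z \in N -> f z \in N'))
  /\ (forall z, U z -> herm z z = 0 -> herm (f z) (f z) = 0).
Proof.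
move=> _ _ _ _ _ _ orth_f; split; last by move=> z Uz zz0; apply: orth_f.
move=> N nullN.
have [X XfN spanX] :=
  @exists_spanning_seq _ _ [set f z | z in [set z | U z /\ z \in N]].
exists <<X>>%VS; split; last by move=> z Uz zN; apply: spanX; exists z.
apply: null_subspace_span => _ _ /XfN[z [Uz zN] <-] /XfN[w [Uw wN] <-].
by apply: orth_f => //; apply: nullN.
Qed.
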